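(* Let $\epsilon>0$, let $G=(S,B,E)$ be a bipartite graph with weights $w:S\to\mathbb{R}_+$ and a fixed arrival order of $B$. Let $j\in S$ and let $G_{-j}$ be obtained from $G$ by deleting $j$. Fix $x\in[0,1]^S$, let $M$ be the matching produced by $\epsilon$-\textsc{Ranking} on $G$ with samples $x$, and $M_{-j}$ the matching produced by $\epsilon$-\textsc{Ranking} on $G_{-j}$ with samples $x$ restricted to $S\setminus\{j\}$. Then \[ w(M_{-j})-\frac{2}{\epsilon}w_j \le w(M)\le w(M_{-j})+w_j. \] Moreover, for every $i\in B$, the utility $u_i$ of $i$ in the run on $G$ is at least its utility in the run on $G_{-j}$.
   Context: Buyers $B$ arrive one at a time in the fixed order, each revealing its neighborhood $N(i)\subseteq S$. $\epsilon$-\textsc{Ranking} with samples $x\in[0,1]^S$: when buyer $i$ arrives, match $i$ to an unmatched $j\in N(i)$ maximizing $w_j(1-e^{x_j-1-\epsilon})$ (leave $i$ unmatched if none exists), with ties broken according to a fixed total order on $S$. For a matching $M$, $w(M)=\sum_{\{i,j\}\in M}w_j$ where $j\in S$. The utility of a buyer $i$ is $u_i=w_j(1-e^{x_j-1-\epsilon})$ if $i$ is matched to $j$, and $u_i=0$ if $i$ is unmatched. *)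

From HB Require Import structures.
From mathcomp Require Import all_boot all_order all_algebra.
From mathcomp Require Import reals sequences exp.
Set Implicit Arguments. Unset Strict Implicit. Unset Printing Implicit Defensive.
Import Order.TTheory GRing.Theory Num.Theory.
Local Open Scope ring_scope.

Section Ranking.
Variables (R : realType) (S B : finType).

Definition rk_value (w x : S -> R) (eps : R) (k : S) : R :=
  w k * (1 - expR (x k - 1 - eps)).

(* Buyer i arrives; [used] are the already matched items; [tb] is the fixed
   total order on S used for tie-breaking (earlier in tb = preferred). *)
Definition rk_pick (N : B -> {set S}) (tb : seq S) (w x : S -> R) (eps : R)
    (used : {set S}) (i : B) : option S :=
  let cands := [seq k <- tb | (k \in N i) && (k \notin used)] in
  ohead [seq k <- cands |
           all (fun k' => rk_value w x eps k' <= rk_value w x eps k) cands].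

Fixpoint rk_run (N : B -> {set S}) (tb : seq S) (w x : S -> R) (eps : R)
    (used : {set S}) (ord : seq B) : seq (B * S) :=
  match ord with
  | [::] => [::]
  | i :: ord' =>
      match rk_pick N tb w x eps used i with
      | None => rk_run N tb w x eps used ord'
      | Some k => (i, k) :: rk_run N tb w x eps (k |: used) ord'
      end
  end.

Definition ranking (N : B -> {set S}) (ord : seq B) (tb : seq S)
    (w x : S -> R) (eps : R) : seq (B * S) :=
  rk_run N tb w x eps set0 ord.

Definition delete_item (N : B -> {set S}) (j : S) : B -> {set S} :=
  fun i => N i :\ j.

Definition mweight (w : S -> R) (M : seq (B * S)) : R :=
  \sum_(p <- M) w p.2.

Definition matched_to (M : seq (B * S)) (i : B) : option S :=
  ohead [seq p.2 | p <- M & p.1 == i].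

Definition utility (w x : S -> R) (eps : R) (M : seq (B * S)) (i : B) : R :=
  if matched_to M i is Some k then rk_value w x eps k else 0.

End Ranking.

From HB Require Import structures.
From mathcomp Require Import all_boot all_order all_algebra.
From mathcomp Require Import reals sequences exp.
From mathcomp Require Import ring lra.
Set Implicit Arguments. Unset Strict Implicit. Unset Printing Implicit Defensive.
Import Order.TTheory GRing.Theory Num.Theory.

(* Run eps-Ranking on G and on G_{-j} side by side.  At every moment the free
   items of G are those of G_{-j} other than j, plus at most one displaced item
   d that is used in G_{-j} (or is j itself) and whose priority
   w_d (1 - e^{x_d - 1 - eps}) is at most that of j; initially d = j.  When a
   buyer arrives, either both runs give it the same item, or G gives it d and
   G_{-j} gives it an item of no larger priority, which becomes the new
   displaced item (or nothing, and the displaced item disappears).  Hence every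
   buyer is at least as well off in G, and w(M) + w(d_final) = w(M_{-j}) + w_j.
   Finally w_d >= 0, and a priority at most that of j forces
   (w_d - w_j) eps <= w_j. *)

Lemma ohead_mem (T : eqType) (s : seq T) (k : T) : ohead s = Some k -> k \in s.
Proof. by case: s => // y s [->]; rewrite mem_head. Qed.

Lemma ohead_filter_sub (T : eqType) (a b : pred T) (s : seq T) (k : T) :
  ohead (filter a s) = Some k -> b k -> {in s, subpred b a} ->
  ohead (filter b s) = Some k.
Proof.
elim: s => [//|y s IHs] /=; case: ifP => [_ [<-] -> //| ay].
move=> /IHs IH bk ba; have -> : b y = false.
  by apply: contraFF ay => /(ba y (mem_head _ _)).
by apply: IH => // z zs; apply: ba; rewrite in_cons zs orbT.
Qed.

Section FirstArgmax.
Variables (d : Order.disp_t) (T : orderType d) (I : eqType) (v : I -> T).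
Local Open Scope order_scope.

Definition first_argmax (s : seq I) : option I :=
  ohead [seq k <- s | all (fun k' => v k' <= v k) s].

Lemma first_argmax_Some s k : first_argmax s = Some k ->
  k \in s /\ {in s, forall z, v z <= v k}.
Proof. by move/ohead_mem; rewrite mem_filter => /andP [/allP]. Qed.

Lemma exists_argmax s : s != [::] ->
  exists2 m, m \in s & {in s, forall z, v z <= v m}.
Proof.
elim: s => [//|y [|z s] IHs] _.
  by exists y => [|? /[!inE]/eqP->]; rewrite ?mem_head.
have [m ms mmax] := IHs isT; have [ym|my] := leP (v y) (v m).
  by exists m => [|u /[!inE]/predU1P[->//|/mmax//]]; rewrite inE ms orbT.
exists y => [|u /[!inE]/predU1P[->//|/mmax/le_trans->//]].
  exact: mem_head.
exact: ltW.
Qed.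

Lemma first_argmax_None s : first_argmax s = None -> s = [::].
Proof.
case: s => [//|y s] hN; have [m ms mmax] := @exists_argmax (y :: s) isT.
have : m \in [seq k <- y :: s | all (fun k' => v k' <= v k) (y :: s)].
  by rewrite mem_filter ms andbT; apply/allP.
by move: hN; rewrite /first_argmax; case: filter.
Qed.

Lemma first_argmax_filter_sub (p q : pred I) s k :
  first_argmax (filter p s) = Some k -> {in s, subpred q p} -> q k ->
  first_argmax (filter q s) = Some k.
Proof.
move=> hk qp qk; have [] := first_argmax_Some hk.
rewrite mem_filter => /andP [pk ks] kmax.
move: hk; rewrite /first_argmax -!filter_predI => hk.
apply: (ohead_filter_sub hk) => [|y ys /andP [/allP ymax qy]] /=.
  rewrite qk andbT; apply/allP => z; rewrite mem_filter => /andP [qz zs].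
  by apply: kmax; rewrite mem_filter (qp z zs qz).
have pyq := qp y ys qy; rewrite pyq andbT; apply/allP => z zp.
by apply: le_trans (kmax z zp) (ymax k _); rewrite mem_filter qk.
Qed.
End FirstArgmax.

Local Open Scope ring_scope.

Section RankingRun.
Variables (R : realType) (S B : finType) (N : B -> {set S}) (tb : seq S)
  (w x : S -> R) (eps : R).

Local Notation pick := (rk_pick N tb w x eps).
Local Notation run := (rk_run N tb w x eps).

Definition available (U : {set S}) (i : B) : pred S :=
  fun k => (k \in N i) && (k \notin U).

Definition mark_used (o : option S) (U : {set S}) : {set S} :=
  oapp (fun k => k |: U) U o.

Lemma rk_pickE U i :
  pick U i = first_argmax (rk_value w x eps) (filter (available U i) tb).
Proof. by []. Qed.

Lemma mweight_rk_run_cons U i ord :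
  mweight w (run U (i :: ord)) =
  oapp w 0 (pick U i) + mweight w (run (mark_used (pick U i) U) ord).
Proof. by rewrite /=; case: rk_pick => [k|]; rewrite /mweight ?big_cons ?add0r. Qed.

Lemma matched_to_rk_run_notin U ord i : i \notin ord ->
  matched_to (run U ord) i = None.
Proof.
elim: ord U => [//|i' ord IH] U /[!inE] /norP [ii' iord] /=.
case: rk_pick => [k|]; last exact: IH.
by rewrite /matched_to /= eq_sym (negbTE ii') -/(matched_to _ _) IH.
Qed.

Lemma matched_to_rk_run_cons U i ord b : i \notin ord ->
  matched_to (run U (i :: ord)) b =
  if i == b then pick U i else matched_to (run (mark_used (pick U i) U) ord) b.
Proof.
move=> iord /=; case: rk_pick => [k|] /=.
  by rewrite /matched_to /=; case: eqP.
by case: eqP => [<-|//]; rewrite matched_to_rk_run_notin.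
Qed.

End RankingRun.

Section Coupling.
Variables (R : realType) (S B : finType) (N : B -> {set S}) (tb : seq S)
  (w x : S -> R) (eps : R) (j : S).
Hypothesis v_ge0 : forall k, 0 <= rk_value w x eps k.

Local Notation v := (rk_value w x eps).
Local Notation Nj := (delete_item N j).
Local Notation pick := (rk_pick N tb w x eps).
Local Notation pickj := (rk_pick Nj tb w x eps).
Local Notation run := (rk_run N tb w x eps).
Local Notation runj := (rk_run Nj tb w x eps).

(* [U] and [Uj] are the items used so far in G and in G_{-j}, [d] is the
   displaced item. *)
Definition coupled (U Uj : {set S}) (d : option S) : Prop :=
  (forall k, (k \notin U) = (k \notin Uj) && (k != j) || (d == Some k)) /\
  (forall k, d = Some k -> ((k \in Uj) || (k == j)) && (v k <= v j)).

Lemma coupled0 : coupled set0 set0 (Some j).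
Proof. by split=> [k|k [<-]]; rewrite ?inE ?eqxx //= eq_sym orNb. Qed.

Lemma coupled_available U Uj d i : coupled U Uj d ->
  subpred (available Nj Uj i) (available N U i).
Proof.
case=> free _ k; rewrite /available /delete_item in_setD1 free.
by case/andP=> /andP [-> ->] ->.
Qed.

Lemma coupled_pick_None U Uj d i : coupled U Uj d ->
  pick U i = None -> pickj Uj i = None.
Proof.
rewrite !rk_pickE => c /first_argmax_None nofree.
case hk: first_argmax => [k|//]; have [] := first_argmax_Some hk.
rewrite mem_filter => /andP [/(coupled_available c) kav ktb] _.
have : k \in filter (available N U i) tb by rewrite mem_filter kav.
by rewrite nofree.
Qed.

Lemma coupled_pick_same U Uj d i k : coupled U Uj d ->
  pick U i = Some k -> d != Some k ->
  pickj Uj i = Some k /\ coupled (k |: U) (k |: Uj) d.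
Proof.
move=> c hk dk; have [free dom] := c; move: (hk); rewrite rk_pickE => hk'.
have [] := first_argmax_Some hk'; rewrite mem_filter => /andP [/andP [Nik kU] _] _.
move: kU; rewrite free (negbTE dk) orbF => /andP [kUj kj].
split.
  rewrite rk_pickE; apply: (first_argmax_filter_sub hk') => [z _|].
    exact: coupled_available c z.
  by rewrite /available /delete_item in_setD1 kj Nik.
split=> [z|z /dom /andP [zUj ->]]; last by rewrite in_setU1 -orbA zUj orbT.
rewrite !in_setU1 !negb_or free; case: eqVneq => [->|//].
by rewrite /= (negbTE dk).
Qed.

Lemma coupled_pick_displaced U Uj d i k : coupled U Uj d ->
  pick U i = Some k -> d = Some k ->
  coupled (k |: U) (mark_used (pickj Uj i) Uj) (pickj Uj i) /\
  oapp v 0 (pickj Uj i) <= v k.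
Proof.
move=> c hk dk; have [free dom] := c; have /andP [kUj vkj] := dom k dk.
have kfreej : ((k \notin Uj) && (k != j)) = false by rewrite -negb_or kUj.
case hk': pickj => [k'|] /=; last first.
  split; last exact: v_ge0.
  split=> // z; rewrite /mark_used /= in_setU1 negb_or free dk /=.
  have [->|zk] := eqVneq z k; rewrite ?kfreej //.
  by rewrite (inj_eq Some_inj) [k == z]eq_sym (negbTE zk) orbF.
move: (hk) (hk'); rewrite !rk_pickE => /first_argmax_Some [_ kmax].
case/first_argmax_Some; rewrite mem_filter => /andP [k'av tbk'] _.
have vk'k : v k' <= v k.
  by apply: kmax; rewrite mem_filter tbk' (coupled_available c).
move: k'av; rewrite /available /delete_item in_setD1 => /andP [/andP [k'j _] k'Uj].
split=> //; split=> [z|z [<-]]; last by rewrite in_setU1 eqxx (le_trans vk'k).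
rewrite !in_setU1 !negb_or free dk /=.
have k'k : k' != k by apply: contraTneq kUj => <-; rewrite negb_or k'Uj k'j.
have [->|zk'] := eqVneq z k'; first by rewrite k'Uj k'j k'k eqxx orbT.
rewrite !(inj_eq Some_inj); have [->|zk] /= := eqVneq z k.
  by rewrite kfreej (negbTE k'k).
by rewrite [k' == z]eq_sym (negbTE zk').
Qed.

Lemma coupled_step U Uj d i : coupled U Uj d ->
  exists d', [/\ coupled (mark_used (pick U i) U) (mark_used (pickj Uj i) Uj) d',
    oapp w 0 (pick U i) + oapp w 0 d' = oapp w 0 (pickj Uj i) + oapp w 0 d &
    oapp v 0 (pickj Uj i) <= oapp v 0 (pick U i)].
Proof.
move=> c; case hk: (pick U i) => [k|]; last first.
  by exists d; rewrite (coupled_pick_None c hk).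
have [dk|dk] := eqVneq d (Some k).
  have [c' vk] := coupled_pick_displaced c hk dk.
  by exists (pickj Uj i); rewrite dk addrC.
by have [-> c'] := coupled_pick_same c hk dk; exists d.
Qed.

Lemma coupled_run_weight U Uj d ord : coupled U Uj d ->
  exists2 dF, (forall k, dF = Some k -> v k <= v j) &
    mweight w (run U ord) + oapp w 0 dF = mweight w (runj Uj ord) + oapp w 0 d.
Proof.
elim: ord U Uj d => [|i ord IH] U Uj d c.
  by exists d => [k /c.2 /andP []|].
have [d' [c' stepE _]] := coupled_step i c; have [dF dF_dom runE] := IH _ _ _ c'.
by exists dF => //; rewrite !mweight_rk_run_cons; lra.
Qed.

Lemma utilityE (M : seq (B * S)) b :
  utility w x eps M b = oapp v 0 (matched_to M b).
Proof. by rewrite /utility; case: matched_to. Qed.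

Lemma coupled_run_utility U Uj d ord : uniq ord -> coupled U Uj d ->
  forall b, utility w x eps (runj Uj ord) b <= utility w x eps (run U ord) b.
Proof.
elim: ord U Uj d => [|i ord IH] U Uj d; first by rewrite /utility /matched_to.
case/andP=> iord uord c b; have [d' [c' _ step_le]] := coupled_step i c.
rewrite !utilityE !matched_to_rk_run_cons //; case: eqVneq => _ //.
by rewrite -!utilityE (IH _ _ _ uord c').
Qed.

End Coupling.

Section RankingValue.
Variables (R : realType) (S : finType) (w x : S -> R) (eps : R).
Hypothesis w_ge0 : forall k, 0 <= w k.
Hypothesis x_le1 : forall k, x k <= 1.
Hypothesis eps_gt0 : 0 < eps.

Local Notation v := (rk_value w x eps).

Lemma rk_value_ge0 k : 0 <= v k.
Proof.
rewrite mulr_ge0 // subr_ge0 -[X in _ <= X]expR0 ler_expR.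
by have := x_le1 k; have := eps_gt0; lra.
Qed.

Lemma rk_value_le_weight k : v k <= w k.
Proof. by rewrite ler_piMr // lerBlDr lerDl expR_ge0. Qed.

Lemma weight_le_rk_value k : w k * (1 - expR (- eps)) <= v k.
Proof.
by rewrite ler_wpM2l // lerB // ler_expR; have := x_le1 k; lra.
Qed.

Lemma weight_gap_le m j : v m <= v j -> (w m - w j) * eps <= w j.
Proof.
move=> vmj; set E := expR eps.
have E_gt0 : 0 < E := expR_gt0 eps.
have E_ge1Dx : 1 + eps <= E := expR_ge1Dx eps.
have gapE : (w m - w j) * (E - 1) <= w j.
  have wm_le_wj : w m * (1 - E^-1) <= w j.
    rewrite -expRN (le_trans (weight_le_rk_value m)) //.
    exact: le_trans vmj (rk_value_le_weight j).
  have := ler_wpM2r (ltW E_gt0) wm_le_wj.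
  have -> : w m * (1 - E^-1) * E = w m * (E - 1) by field; rewrite gt_eqF.
  lra.
have [wmj|wjm] := leP (w m) (w j); first by have := w_ge0 j; have := eps_gt0; nra.
by apply: le_trans gapE; rewrite ler_wpM2l ?subr_ge0 ?(ltW wjm) //; lra.
Qed.

End RankingValue.

Theorem lemma6 (R : realType) (S B : finType) (N : B -> {set S})
  (ord : seq B) (tb : seq S) (w x : S -> R) (eps : R) (j : S) :
  0 < eps ->
  (forall k, 0 <= w k) ->
  (forall k, 0 <= x k <= 1) ->
  uniq ord -> (forall i, i \in ord) ->
  uniq tb -> (forall k, k \in tb) ->
  let M := ranking N ord tb w x eps in
  let Mj := ranking (delete_item N j) ord tb w x eps in
  [/\ mweight w Mj - (2 / eps) * w j <= mweight w M,
      mweight w M <= mweight w Mj + w j &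
      forall i : B, utility w x eps Mj i <= utility w x eps M i].
Proof.
move=> eps_gt0 w_ge0 x01 ord_uniq _ _ _; rewrite /ranking.
have x_le1 k : x k <= 1 by case/andP: (x01 k).
have v_ge0 := rk_value_ge0 w_ge0 x_le1 eps_gt0.
have c0 := coupled0 w x eps j.
have [dF dF_dom /= weightE] := coupled_run_weight N tb v_ge0 ord c0.
have wdF_ge0 : 0 <= oapp w 0 dF by case: dF {dF_dom weightE}.
have wj_ge0 := w_ge0 j.
have slack_ge0 : 0 <= 2 / eps * w j by rewrite mulr_ge0 ?divr_ge0 ?(ltW eps_gt0).
split; last exact: (coupled_run_utility N tb v_ge0 ord_uniq c0).
- have gap : oapp w 0 dF - w j <= 2 / eps * w j.
    case: dF {weightE wdF_ge0} dF_dom => [m /(_ m erefl) vmj|_] /=; last by lra.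
    rewrite mulrAC ler_pdivlMr //.
    by have := weight_gap_le w_ge0 x_le1 eps_gt0 vmj; have := eps_gt0; nra.
  by move: weightE gap; lra.
- by move: weightE; lra.
Qed.
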